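(* Let $\mathcal{X}=\{1,\dots,n\}$, let $\pi$ be a strictly positive probability distribution on $\mathcal{X}$, let $P$ be a $\pi$-reversible transition matrix, let $G$ be the Gibbs kernel induced by some partition of $\mathcal{X}$, and let $A_\alpha=\alpha P+(1-\alpha)G$. Then for every integer $l\geq2$ and every $\alpha\in(0,1)$, $$\|A_\alpha^l-\Pi\|_{F,\pi}^2\leq(1-\alpha\gamma^*(P))^{2(l-1)}\|A_\alpha-\Pi\|_{F,\pi}^2.$$
   Context: $\pi$-reversible means $\pi(x)P(x,y)=\pi(y)P(y,x)$. Gibbs kernel of a partition $\bigsqcup_i\mathcal{O}_i$: $G(x,y)=\pi(y)/\pi(\mathcal{O}(x))$ if $y\in\mathcal{O}(x)$ and $0$ otherwise. $\Pi$ is the matrix with every row equal to $\pi$; $\|M\|_{F,\pi}^2=\operatorname{Tr}(M^*M)$ with $M^*(x,y)=\pi(y)M(y,x)/\pi(x)$. For $\pi$-reversible $P$ with eigenvalues $\lambda_1\ge\dots\ge\lambda_n$, $\gamma^*(P)=1-\max\{|\lambda_2(P)|,|\lambda_n(P)|\}$. *)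

From HB Require Import structures.
From mathcomp Require Import all_boot all_order all_algebra.
Set Implicit Arguments. Unset Strict Implicit. Unset Printing Implicit Defensive.
Import Order.TTheory GRing.Theory Num.Theory.
Local Open Scope ring_scope.

Section Defs.
Variables (R : rcfType) (n : nat).

Definition pos_prob (pi : 'I_n -> R) : Prop :=
  (forall x, 0 < pi x) /\ \sum_x pi x = 1.

Definition stochastic (P : 'M[R]_n) : Prop :=
  (forall x y, 0 <= P x y) /\ (forall x, \sum_y P x y = 1).

Definition reversible (pi : 'I_n -> R) (P : 'M[R]_n) : Prop :=
  forall x y, pi x * P x y = pi y * P y x.

Definition gibbs_kernel (pi : 'I_n -> R) (part : {set {set 'I_n}}) : 'M[R]_n :=
  \matrix_(x, y) (if y \in pblock part x
                  then pi y / \sum_(z in pblock part x) pi z else 0).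

Definition Pimx (pi : 'I_n -> R) : 'M[R]_n := \matrix_(x, y) pi y.

Definition pi_adj (pi : 'I_n -> R) (M : 'M[R]_n) : 'M[R]_n :=
  \matrix_(x, y) (pi y * M y x / pi x).

Definition frob_pi2 (pi : 'I_n -> R) (M : 'M[R]_n) : R :=
  \tr (pi_adj pi M *m M).

Definition sorted_eigenvalues (P : 'M[R]_n) (s : seq R) : Prop :=
  sorted (fun a b => b <= a) s /\
  char_poly P = \prod_(l <- s) ('X - l%:P).

(* gamma^*(P) = 1 - max(|lambda_2|, |lambda_n|) computed from the sorted
   eigenvalue list s (lambda_2 = s`_1, lambda_n = s`_(n-1)). *)
Definition abs_spectral_gap (s : seq R) : R :=
  1 - Num.max `|s`_1| `|s`_(n.-1)|.

End Defs.

(* Let |f|^2 = sum_x pi(x) f(x)^2.  Since ||M||_{F,pi}^2 is the sum of the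
   squared norms of the columns of M weighted by 1/pi, any B with |B f| <= c |f|
   for all f satisfies ||B M||_{F,pi} <= c ||M||_{F,pi}.  As A_alpha is
   stochastic with stationary law pi, A_alpha^l - Pi = (A_alpha - Pi)^l, so it
   suffices to show |(A_alpha - Pi) f| <= (alpha rho + 1 - alpha) |f| with
   rho = 1 - gamma^*(P), and to apply this l - 1 times to A_alpha - Pi.
   Now A_alpha - Pi = alpha (P - Pi) + (1 - alpha) (G - Pi).  The Gibbs kernel is
   stochastic with stationary law pi, so G - Pi is a contraction by Jensen's
   inequality.  For P, (P - Pi) f = P g where g = f - pi(f) is centred, and
   reversibility makes D^(1/2) P D^(-1/2) (D = diag pi) symmetric with the same
   spectrum; its unitary diagonalisation over R[i] shows that P damps every
   centred g by rho, because only the Perron direction sqrt(pi) can carry an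
   eigenvalue of modulus larger than rho.  The two bounds combine by the
   triangle inequality. *)

From HB Require Import structures.
From mathcomp Require Import all_boot all_order all_algebra complex.
From mathcomp Require Import ring lra.
Set Implicit Arguments.
Unset Strict Implicit.
Unset Printing Implicit Defensive.

Import Order.TTheory GRing.Theory Num.Theory.
Local Open Scope ring_scope.
Local Open Scope sesquilinear_scope.

Section UnitaryDiagonalization.
Variables (C : numClosedFieldType) (n : nat).
Implicit Types (U : 'M[C]_n) (d x y : 'rV[C]_n).

Lemma dotmx_mulmx_unitary U x y :
  U \is unitarymx -> dotmx (x *m U) (y *m U) = dotmx x y.
Proof.
move=> Uu; rewrite !dotmxE trmx_mul map_mxM mulmxA -(mulmxA x).
by rewrite (unitarymxP Uu) mulmx1.
Qed.

Lemma dotmx_sumE x y : dotmx x y = \sum_i x 0 i * (y 0 i)^*.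
Proof. by rewrite dotmxE mxE; apply: eq_bigr => i _; rewrite !mxE. Qed.

Lemma dotmx_sum_normE x : dotmx x x = \sum_i `|x 0 i| ^+ 2.
Proof. by rewrite dotmx_sumE; apply: eq_bigr => i _; rewrite normCK. Qed.

Section AtMostOneLargeEntry.
Variables (d : 'rV[C]_n) (rho : C).
Hypothesis rho_ge0 : 0 <= rho.
Hypothesis d_le1 : forall k, `|d 0 k| <= 1.
Hypothesis d_large_uniq :
  forall k j, rho < `|d 0 k| -> rho < `|d 0 j| -> k = j.

(* A nonzero fixed vector of [diag_mx d] lives on the eigenvalue-1 entries,
   hence on the unique entry of modulus above [rho]: orthogonality to it kills
   that entry, and every other entry is damped by [rho]. *)
Lemma diag_mx_orthogonal_fixed_contract x y :
  y *m diag_mx d = y -> y != 0 -> dotmx x y = 0 ->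
  dotmx (x *m diag_mx d) (x *m diag_mx d) <= rho ^+ 2 * dotmx x x.
Proof.
move=> yd y0 xy; rewrite !dotmx_sum_normE mulr_sumr; apply: ler_sum => k _.
rewrite mul_mx_diag mxE normrM exprMn mulrC.
have [dk_le | rho_lt_dk] := real_leP (normr_real (d 0 k)) (ger0_real rho_ge0).
  by rewrite ler_wpM2r ?exprn_ge0 // !expr2 ler_pM.
have y_supp j : y 0 j != 0 -> j = k.
  move=> yj0; have dj1 : d 0 j = 1.
    apply: (mulfI yj0); rewrite mulr1.
    by have /rowP/(_ j) := yd; rewrite mul_mx_diag mxE.
  apply: esym (d_large_uniq rho_lt_dk _).
  by rewrite dj1 normr1 (lt_le_trans rho_lt_dk).
have [j yj0] : exists j, y 0 j != 0.
  apply/existsP; apply: contraNT y0; rewrite negb_exists => /forallP y_0.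
  by apply/eqP/rowP => j; rewrite mxE; apply/eqP/negPn.
have ykE := y_supp j yj0; subst j.
move: xy; rewrite dotmx_sumE (bigD1 k) //= big1 => [|j jk]; last first.
  by rewrite (_ : y 0 j = 0) ?conjC0 ?mulr0 //; apply: contraNeq jk => /y_supp ->.
rewrite addr0 => /eqP; rewrite mulf_eq0 conjC_eq0 (negbTE yj0) orbF => /eqP ->.
by rewrite normr0 expr0n /= !(mul0r, mulr0).
Qed.

Lemma unitary_diag_orthogonal_fixed_contract (U S : 'M[C]_n) x y :
  U \is unitarymx -> S = U^t* *m diag_mx d *m U ->
  y *m S = y -> y != 0 -> dotmx x y = 0 ->
  dotmx (x *m S) (x *m S) <= rho ^+ 2 * dotmx x x.
Proof.
move=> Uu SE yS y0 xy.
have UtU : U^t* *m U = 1%:M by apply: mulmx1C; apply/unitarymxP.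
have unU (z : 'rV_n) : z = z *m U^t* *m U by rewrite -mulmxA UtU mulmx1.
have SzE (z : 'rV_n) : z *m S = z *m U^t* *m diag_mx d *m U by rewrite SE !mulmxA.
have unU_dotmx z z' : dotmx z z' = dotmx (z *m U^t*) (z' *m U^t*).
  by rewrite -[RHS](dotmx_mulmx_unitary _ _ Uu) -!unU.
rewrite SzE dotmx_mulmx_unitary // [dotmx x x]unU_dotmx.
apply: (@diag_mx_orthogonal_fixed_contract _ (y *m U^t*)).
- by rewrite -(mulmxtVK (y *m U^t* *m diag_mx d) Uu) -SzE yS.
- by apply: contraNneq y0 => y0'; rewrite (unU y) y0' mul0mx.
- by rewrite -unU_dotmx.
Qed.
End AtMostOneLargeEntry.
End UnitaryDiagonalization.

Lemma char_poly_similar (F : fieldType) n (A U V : 'M[F]_n) :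
  V *m U = 1%:M -> char_poly (V *m A *m U) = char_poly A.
Proof.
move=> VU; rewrite /char_poly /char_poly_mx.
have -> : 'X%:M - map_mx polyC (V *m A *m U) =
    map_mx polyC V *m ('X%:M - map_mx polyC A) *m map_mx polyC U.
  rewrite !map_mxM mulmxBr mulmxBl; congr (_ - _).
  by rewrite scalar_mxC -mulmxA -map_mxM VU map_mx1 mulmx1.
rewrite !det_mulmx !det_map_mx mulrC mulrA -rmorphM -det_mulmx (mulmx1C VU).
by rewrite det1 rmorph1 mul1r.
Qed.

Lemma hermitian_unitary_diagonalization (C : numClosedFieldType) n
    (S : 'M[C]_n) :
  S \is hermsymmx ->
  exists U d, [/\ U \is unitarymx, S = U^t* *m diag_mx d *m U &
                  char_poly S = \prod_(k < n) ('X - (d 0 k)%:P)].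
Proof.
move=> Sh; have /orthomx_spectralP SE := hermitian_normalmx Sh.
have Uu := spectral_unitarymx S.
exists (spectralmx S), (spectral_diag S); rewrite -invmx_unitary //; split => //.
rewrite {1}SE char_poly_similar; last by rewrite mulVmx // unitarymx_unit.
rewrite char_poly_trig ?diag_mx_is_trig //.
by apply: eq_bigr => k _; rewrite mxE eqxx mulr1n.
Qed.

Lemma count_le1_enum_eq (T : finType) (p : pred T) (k j : T) :
  (count p (enum T) <= 1)%N -> p k -> p j -> k = j.
Proof.
move=> p_le1 pk pj; apply/eqP; apply: contraTT p_le1 => kj.
rewrite -ltnNge -size_filter (_ : 2%N = size [:: k; j]) //.
apply: uniq_leq_size; first by rewrite /= inE kj.
by move=> x; rewrite !inE mem_filter mem_enum andbT => /orP[] /eqP ->.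
Qed.

Lemma sorted_ge_behead_norm_le (R : realDomainType) (s : seq R) y :
  sorted (fun a b => b <= a) s -> y \in behead s ->
  `|y| <= Num.max `|s`_1| `|s`_(size s).-1|.
Proof.
move=> s_sorted /(nthP 0) [m].
rewrite size_behead nth_behead ltn_predRL => m_lt <-.
have ge_nth i j : (i <= j)%N -> (j < size s)%N -> s`_j <= s`_i.
  move=> ij js; have le_trans' : transitive (fun a b : R => b <= a).
    by move=> a b c ba cb; apply: le_trans cb ba.
  apply: (sorted_leq_nth le_trans' (@lexx _ _) 0 s_sorted) => //.
  by rewrite inE (leq_ltn_trans ij js).
have le_first : s`_m.+1 <= s`_1 by apply: ge_nth.
have ge_last : s`_(size s).-1 <= s`_m.+1.
  by apply: ge_nth; rewrite ?ltn_predRL ?ltn_predL // (ltn_trans _ m_lt).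
rewrite le_max; have [y_ge0 | y_lt0] := lerP 0 s`_m.+1.
  by rewrite ger0_norm // (le_trans le_first (ler_norm _)).
rewrite ltr0_norm // orbC (@le_trans _ _ (- s`_(size s).-1)) ?lerN2 //.
by rewrite -normrN ler_norm.
Qed.

Lemma sorted_ge_count_large_le1 (R : realDomainType) (s : seq R) :
  sorted (fun a b => b <= a) s ->
  (count (fun t => (Num.max `|s`_1| `|s`_(size s).-1| < `|t|)%R) s <= 1)%N.
Proof.
move=> s_sorted; have := sorted_ge_behead_norm_le s_sorted.
set rho := Num.max _ _; clearbody rho; case: s {s_sorted} => //= x s' s'_le.
rewrite (eq_in_count (a2 := pred0)) ?count_pred0 ?addn0 ?leq_b1 // => y /s'_le.
by rewrite leNgt => /negbTE.
Qed.

Section RealSymmetric.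
Local Open Scope complex_scope.
Variables (R : rcfType) (n : nat).
Local Notation toC := (real_complex R).

Lemma norm_real_complex (x : R) : `|x%:C| = `|x|%:C.
Proof. by rewrite normc_def /= expr0n /= addr0 sqrtr_sqr. Qed.

Lemma conjC_real_complex (x : R) : (x%:C)^*%R = x%:C.
Proof. by rewrite conj_Creal // complex_real. Qed.

Lemma dotmx_real_complex (v : 'rV[R]_n) :
  dotmx (map_mx toC v) (map_mx toC v) = (\sum_i v 0 i ^+ 2)%:C.
Proof.
rewrite dotmx_sum_normE rmorph_sum; apply: eq_bigr => i _.
by rewrite mxE norm_real_complex -rmorphXn real_normK ?num_real.
Qed.

Lemma map_real_complex_hermitian (S : 'M[R]_n) :
  S^T = S -> map_mx toC S \is hermsymmx.
Proof.
move=> Ssym; apply/is_hermitianmxP; rewrite expr0 scale1r; apply/matrixP => i j.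
by rewrite !mxE conjC_real_complex -[in RHS]Ssym mxE.
Qed.

Lemma symmetric_orthogonal_fixed_contract (S : 'M[R]_n) (s : seq R)
    (q w : 'rV[R]_n) :
  S^T = S -> sorted_eigenvalues S s -> {in s, forall x, `|x| <= 1} ->
  q *m S = q -> q != 0 -> (w *m q^T) 0 0 = 0 ->
  \sum_i (w *m S) 0 i ^+ 2 <=
    Num.max `|s`_1| `|s`_(n.-1)| ^+ 2 * \sum_i w 0 i ^+ 2.
Proof.
move=> Ssym [s_sorted Schar] s_le1 qS q0 wq.
have size_s : size s = n.
  have := congr1 (fun p : {poly R} => size p) Schar.
  by rewrite size_char_poly size_prod_XsubC => -[].
have := sorted_ge_count_large_le1 s_sorted; rewrite size_s.
set rho := Num.max _ _ => large_le1.
have rho_ge0 : 0 <= rho by rewrite le_max normr_ge0.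
pose SC := map_mx toC S.
have SC_herm : SC \is hermsymmx by apply: map_real_complex_hermitian.
have [U [d [Uu SE SCchar]]] := hermitian_unitary_diagonalization SC_herm.
have d_perm : perm_eq [seq d 0 k | k <- enum 'I_n] (map toC s).
  apply: prod_XsubC_eq; rewrite big_map big_enum /= -SCchar.
  by rewrite -map_char_poly Schar map_prod_XsubC big_map.
have d_real k : exists2 t, t \in s & d 0 k = t%:C.
  have : d 0 k \in map toC s by rewrite -(perm_mem d_perm) map_f ?mem_enum.
  by case/mapP => t; exists t.
suff : dotmx (map_mx toC w *m SC) (map_mx toC w *m SC)
         <= rho%:C ^+ 2 * dotmx (map_mx toC w) (map_mx toC w).
  by rewrite -map_mxM !dotmx_real_complex -rmorphXn -rmorphM lecR.
apply: (unitary_diag_orthogonal_fixed_contract (d := d) (y := map_mx toC q)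
          _ _ _ Uu SE).
- by rewrite ler0c.
- move=> k; have [t ts ->] := d_real k.
  by rewrite norm_real_complex -(rmorph1 toC) lecR s_le1.
- move=> k j dk dj.
  apply: (@count_le1_enum_eq _ (fun k => rho%:C < `|d 0 k|)) dk dj.
  rewrite (eq_count (a2 := preim (d 0) (fun t => rho%:C < `|t|))) //.
  rewrite -count_map (permP d_perm) count_map.
  rewrite (eq_count (a2 := fun t => rho < `|t|)) // => t /=.
  by rewrite norm_real_complex ltcR.
- by rewrite /SC -map_mxM qS.
- by rewrite map_mx_eq0.
- rewrite dotmxE (_ : (map_mx toC q)^t* = map_mx toC q^T).
    by rewrite -map_mxM mxE wq rmorph0.
  by apply/matrixP => i j; rewrite !mxE conjC_real_complex.
Qed.
End RealSymmetric.

Lemma sqr_sum_weighted_le (R : realFieldType) (T : finType) (w a : T -> R) :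
  (forall i, 0 <= w i) -> \sum_i w i = 1 ->
  (\sum_i w i * a i) ^+ 2 <= \sum_i w i * a i ^+ 2.
Proof.
move=> w_ge0 w_sum1.
have var_ge0 m : 0 <= \sum_i w i * (a i - m) ^+ 2.
  by apply: sumr_ge0 => i _; rewrite mulr_ge0 ?sqr_ge0.
have var_expand m : \sum_i w i * (a i - m) ^+ 2 =
    \sum_i w i * a i ^+ 2 - 2 * m * \sum_i w i * a i + m ^+ 2 * \sum_i w i.
  rewrite !mulr_sumr -sumrB -big_split /=; apply: eq_bigr => i _; ring.
have := var_ge0 (\sum_i w i * a i); rewrite var_expand w_sum1; lra.
Qed.

Section WeightedNorm.
Variables (R : rcfType) (n : nat) (pi : 'I_n -> R).
Hypothesis pi_gt0 : forall x, 0 < pi x.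
Hypothesis pi_sum1 : \sum_x pi x = 1.
Implicit Types (f g u v : 'cV[R]_n) (B K M : 'M[R]_n).

Definition pnorm2 f := \sum_x pi x * f x 0 ^+ 2.
Definition pdot f g := \sum_x pi x * (f x 0 * g x 0).
Definition pmean f := \sum_x pi x * f x 0.
Definition stationary K := forall y, \sum_x pi x * K x y = pi y.

Lemma pnorm2_ge0 f : 0 <= pnorm2 f.
Proof. by apply: sumr_ge0 => x _; rewrite mulr_ge0 ?sqr_ge0 ?ltW. Qed.

Lemma pnorm2_le0 f : pnorm2 f <= 0 -> f = 0.
Proof.
move=> f_le0; have /eqP : pnorm2 f = 0.
  by apply/eqP; rewrite eq_le f_le0 pnorm2_ge0.
rewrite psumr_eq0 => [/allP f0|x _]; last by rewrite mulr_ge0 ?sqr_ge0 ?ltW.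
apply/matrixP => x j; rewrite ord1 mxE.
by have /f0 := mem_index_enum x; rewrite mulf_eq0 sqrf_eq0 gt_eqF //= => /eqP.
Qed.

Lemma pnorm2_add_scale u v a b :
  pnorm2 (a *: u + b *: v) =
    a ^+ 2 * pnorm2 u + 2 * a * b * pdot u v + b ^+ 2 * pnorm2 v.
Proof.
rewrite /pnorm2 /pdot !mulr_sumr -!big_split /=; apply: eq_bigr => x _.
by rewrite !mxE; ring.
Qed.

(* Cauchy-Schwarz, read off from [0 <= pnorm2 (u - a v)] without square roots. *)
Lemma pdot_le u v f a :
  0 <= a -> pnorm2 u <= a ^+ 2 * pnorm2 f -> pnorm2 v <= pnorm2 f ->
  pdot u v <= a * pnorm2 f.
Proof.
move=> a_ge0 u_le v_le; have [a0|a_neq0] := eqVneq a 0.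
  move: u_le; rewrite a0 expr0n /= !mul0r => /pnorm2_le0 ->.
  by rewrite /pdot big1 // => x _; rewrite mxE mul0r mulr0.
have a_gt0 : 0 < a by rewrite lt_def a_neq0.
have := pnorm2_ge0 (1 *: u + (- a) *: v); rewrite pnorm2_add_scale => uv_ge0.
have : a ^+ 2 * pnorm2 v <= a ^+ 2 * pnorm2 f by rewrite ler_wpM2l ?sqr_ge0.
rewrite -(ler_pM2l a_gt0); nra.
Qed.

Lemma pnorm2_convex_le u v f a t :
  0 <= a -> 0 <= t <= 1 ->
  pnorm2 u <= a ^+ 2 * pnorm2 f -> pnorm2 v <= pnorm2 f ->
  pnorm2 (t *: u + (1 - t) *: v) <= (t * a + (1 - t)) ^+ 2 * pnorm2 f.
Proof.
move=> a_ge0 /andP[t_ge0 t_le1] u_le v_le; rewrite pnorm2_add_scale.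
have uv_le := pdot_le a_ge0 u_le v_le.
have t1_ge0 : 0 <= t * (1 - t) by rewrite mulr_ge0 // subr_ge0.
have := ler_wpM2l (sqr_ge0 t) u_le.
have := ler_wpM2l t1_ge0 uv_le.
have := ler_wpM2l (sqr_ge0 (1 - t)) v_le.
nra.
Qed.

Lemma frob_pi2_colE M : frob_pi2 pi M = \sum_x (pi x)^-1 * pnorm2 (col x M).
Proof.
rewrite /frob_pi2 /mxtrace; apply: eq_bigr => x _.
rewrite mxE /pnorm2 mulr_sumr; apply: eq_bigr => y _; rewrite !mxE.
by field; rewrite gt_eqF.
Qed.

Lemma frob_pi2_mulmx_le B M c :
  (forall f, pnorm2 (B *m f) <= c * pnorm2 f) ->
  frob_pi2 pi (B *m M) <= c * frob_pi2 pi M.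
Proof.
move=> B_le; rewrite !frob_pi2_colE mulr_sumr; apply: ler_sum => x _.
by rewrite colE -mulmxA -colE mulrCA ler_wpM2l ?invr_ge0 ?(ltW (pi_gt0 x)).
Qed.

Lemma frob_pi2_exp_le B c k :
  0 <= c -> (forall f, pnorm2 (B *m f) <= c * pnorm2 f) ->
  frob_pi2 pi (B ^+ k.+1) <= c ^+ k * frob_pi2 pi B.
Proof.
move=> c_ge0 B_le; elim: k => [|k IHk]; first by rewrite mul1r.
rewrite exprS -mulmxE (le_trans (frob_pi2_mulmx_le _ B_le)) //.
by rewrite [c ^+ _]exprS -mulrA ler_wpM2l.
Qed.

Lemma mulmx_Pimx K : (forall x, \sum_y K x y = 1) -> K *m Pimx pi = Pimx pi.
Proof.
move=> K_sum1; apply/matrixP => x y; rewrite !mxE.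
under eq_bigr do rewrite mxE.
by rewrite -mulr_suml K_sum1 mul1r.
Qed.

Lemma Pimx_mulmx K : stationary K -> Pimx pi *m K = Pimx pi.
Proof.
move=> K_stat; apply/matrixP => x y; rewrite !mxE -K_stat.
by apply: eq_bigr => z _; rewrite mxE.
Qed.

Lemma Pimx_row_sum1 x : \sum_y Pimx pi x y = 1.
Proof. by rewrite -pi_sum1; apply: eq_bigr => y _; rewrite mxE. Qed.

Lemma sub_Pimx_exp K k :
  (forall x, \sum_y K x y = 1) -> stationary K ->
  (K - Pimx pi) ^+ k.+1 = K ^+ k.+1 - Pimx pi.
Proof.
move=> K_sum1 K_stat.
have Pi_mulr_exp j : Pimx pi * K ^+ j = Pimx pi.
  elim: j => [|j IHj]; first by rewrite mulr1.
  by rewrite exprS mulrA -mulmxE Pimx_mulmx // mulmxE.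
elim: k => [|k IHk] //; rewrite exprS IHk mulrBr !mulrBl Pi_mulr_exp -exprS.
rewrite -!mulmxE mulmx_Pimx // mulmx_Pimx ?subrr ?subr0 //.
exact: Pimx_row_sum1.
Qed.

Lemma Pimx_mulmx_col f : Pimx pi *m f = const_mx (pmean f).
Proof.
by apply/matrixP => x j; rewrite ord1 !mxE; apply: eq_bigr => y _; rewrite mxE.
Qed.

Lemma pmean_mulmx K f : stationary K -> pmean (K *m f) = pmean f.
Proof.
move=> K_stat; rewrite /pmean.
under eq_bigr do rewrite mxE mulr_sumr.
rewrite exchange_big /=; apply: eq_bigr => y _.
by rewrite -K_stat mulr_suml; apply: eq_bigr => x _; rewrite mulrA.
Qed.

Lemma pnorm2_sub_pmean f :
  pnorm2 (f - const_mx (pmean f)) = pnorm2 f - pmean f ^+ 2.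
Proof.
rewrite /pnorm2 (eq_bigr (fun x => pi x * f x 0 ^+ 2
    - 2 * pmean f * (pi x * f x 0) + pmean f ^+ 2 * pi x)) => [|x _]; last first.
  by rewrite !mxE; ring.
by rewrite big_split sumrB /= -!mulr_sumr pi_sum1 -/(pmean f); ring.
Qed.

Lemma pmean_sub_pmean f : pmean (f - const_mx (pmean f)) = 0.
Proof.
rewrite /pmean; under eq_bigr do rewrite !mxE mulrBr.
by rewrite sumrB -mulr_suml pi_sum1 mul1r subrr.
Qed.

Lemma sub_Pimx_mulmx K f : stationary K ->
  (K - Pimx pi) *m f = K *m f - const_mx (pmean (K *m f)).
Proof. by move=> K_stat; rewrite mulmxBl Pimx_mulmx_col pmean_mulmx. Qed.

Lemma stochastic_pnorm2_mulmx_le K f :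
  stochastic K -> stationary K -> pnorm2 (K *m f) <= pnorm2 f.
Proof.
move=> [K_ge0 K_sum1] K_stat.
have -> : pnorm2 f = \sum_x pi x * \sum_y K x y * f y 0 ^+ 2.
  under [RHS]eq_bigr do rewrite mulr_sumr.
  rewrite exchange_big; apply: eq_bigr => y _.
  by rewrite -K_stat mulr_suml; apply: eq_bigr => x _; rewrite mulrA.
apply: ler_sum => x _; rewrite mxE ler_wpM2l ?(ltW (pi_gt0 x)) //.
exact: sqr_sum_weighted_le.
Qed.

Lemma stochastic_sub_Pimx_contract K f :
  stochastic K -> stationary K -> pnorm2 ((K - Pimx pi) *m f) <= pnorm2 f.
Proof.
move=> K_st K_stat; rewrite sub_Pimx_mulmx // pnorm2_sub_pmean lerBlDr.
by rewrite (le_trans (stochastic_pnorm2_mulmx_le _ K_st K_stat)) // lerDl sqr_ge0.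
Qed.

Lemma stationary_mix K1 K2 t :
  stationary K1 -> stationary K2 -> stationary (t *: K1 + (1 - t) *: K2).
Proof.
move=> K1_stat K2_stat y.
under eq_bigr do rewrite !mxE mulrDr mulrCA [X in _ + X]mulrCA.
by rewrite big_split /= -!mulr_sumr K1_stat K2_stat; ring.
Qed.

Lemma mix_sub_Pimx_contract K1 K2 t a f :
  0 <= a -> 0 <= t <= 1 ->
  pnorm2 ((K1 - Pimx pi) *m f) <= a ^+ 2 * pnorm2 f ->
  pnorm2 ((K2 - Pimx pi) *m f) <= pnorm2 f ->
  pnorm2 ((t *: K1 + (1 - t) *: K2 - Pimx pi) *m f)
    <= (t * a + (1 - t)) ^+ 2 * pnorm2 f.
Proof.
move=> a_ge0 t01 K1_le K2_le.
have -> : (t *: K1 + (1 - t) *: K2 - Pimx pi) *m f =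
    t *: ((K1 - Pimx pi) *m f) + (1 - t) *: ((K2 - Pimx pi) *m f).
  rewrite !scalemxAl -mulmxDl; congr (_ *m _).
  by apply/matrixP => i j; rewrite !mxE; ring.
exact: pnorm2_convex_le.
Qed.

End WeightedNorm.

Lemma stochastic_mix (R : rcfType) n (K1 K2 : 'M[R]_n) t :
  0 <= t <= 1 -> stochastic K1 -> stochastic K2 ->
  stochastic (t *: K1 + (1 - t) *: K2).
Proof.
move=> /andP[t_ge0 t_le1] [K1_ge0 K1_sum1] [K2_ge0 K2_sum1]; split => [x y|x].
  by rewrite !mxE addr_ge0 ?mulr_ge0 ?subr_ge0.
under eq_bigr do rewrite !mxE.
by rewrite big_split /= -!mulr_sumr K1_sum1 K2_sum1; ring.
Qed.

Section GibbsKernel.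
Variables (R : rcfType) (n : nat) (pi : 'I_n -> R) (part : {set {set 'I_n}}).
Hypothesis pi_gt0 : forall x, 0 < pi x.
Hypothesis part_full : partition part [set: 'I_n].

Let part_triv : trivIset part. Proof. by case/and3P: part_full. Qed.
Let part_cover : cover part = [set: 'I_n].
Proof. by case/and3P: part_full => /eqP. Qed.

Let mem_pblock_self x : x \in pblock part x.
Proof. by rewrite mem_pblock part_cover inE. Qed.

Let mem_pblock_sym x y : (y \in pblock part x) = (x \in pblock part y).
Proof. by rewrite -!eq_pblock ?part_cover ?inE // eq_sym. Qed.

Let pblock_mass_gt0 x : 0 < \sum_(z in pblock part x) pi z.
Proof.
rewrite (bigD1 x) //= ltr_pwDl //.
by apply: sumr_ge0 => z _; apply: ltW.
Qed.

Lemma gibbs_kernel_stochastic : stochastic (gibbs_kernel pi part).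
Proof.
split => [x y|x]; rewrite ?mxE.
  by case: ifP => // _; rewrite divr_ge0 ?ltW.
under eq_bigr do rewrite mxE.
by rewrite -big_mkcond /= -mulr_suml divff ?gt_eqF.
Qed.

Lemma gibbs_kernel_stationary : stationary pi (gibbs_kernel pi part).
Proof.
move=> y; rewrite (eq_bigr (fun x => if x \in pblock part y
    then pi x * (pi y / \sum_(z in pblock part y) pi z) else 0)) => [|x _].
  by rewrite -big_mkcond /= -mulr_suml mulrCA divff ?mulr1 ?gt_eqF.
rewrite mxE mem_pblock_sym; case: ifP => [x_y|_]; last by rewrite mulr0.
by rewrite (same_pblock part_triv x_y).
Qed.
End GibbsKernel.

Section Reversible.
Variables (R : rcfType) (n : nat) (pi : 'I_n -> R) (P : 'M[R]_n).
Hypothesis pi_gt0 : forall x, 0 < pi x.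
Hypothesis pi_sum1 : \sum_x pi x = 1.
Hypothesis P_stoch : stochastic P.
Hypothesis P_rev : reversible pi P.

Lemma reversible_stationary : stationary pi P.
Proof.
move=> y; under eq_bigr do rewrite P_rev.
by rewrite -mulr_sumr P_stoch.2 mulr1.
Qed.

Lemma stochastic_eigenvalue_le1 x : root (char_poly P) x -> `|x| <= 1.
Proof.
rewrite -eigenvalue_root_char => /eigenvalueP [v vP v0].
have v_norm_gt0 : 0 < \sum_y `|v 0 y|.
  rewrite lt_def sumr_ge0 ?andbT => [|y _]; last exact: normr_ge0.
  apply: contra v0 => /eqP /psumr_eq0P v_0; apply/eqP/rowP => y; rewrite mxE.
  by apply/eqP; rewrite -normr_eq0 v_0.
rewrite -(ler_pM2r v_norm_gt0) mul1r mulr_sumr.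
apply: le_trans (_ : \sum_y \sum_z `|v 0 z| * P z y <= _).
  apply: ler_sum => y _; rewrite -normrM.
  have /rowP/(_ y) := vP; rewrite !mxE => <-.
  apply: le_trans (ler_norm_sum _ _ _) _; apply: ler_sum => z _.
  by rewrite normrM (ger0_norm (P_stoch.1 z y)).
rewrite exchange_big /=; apply: ler_sum => z _.
by rewrite -mulr_sumr P_stoch.2 mulr1.
Qed.

Let sqrt_pi x := Num.sqrt (pi x).

Definition symmetrize : 'M[R]_n :=
  \matrix_(x, y) (sqrt_pi x * P x y / sqrt_pi y).

Let sqrt_pi_neq0 x : sqrt_pi x != 0.
Proof. by rewrite gt_eqF // sqrtr_gt0. Qed.

Let sqr_sqrt_pi x : sqrt_pi x ^+ 2 = pi x.
Proof. by rewrite sqr_sqrtr // ltW. Qed.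

Let P_swap x y : P y x = pi x * P x y / pi y.
Proof. by rewrite P_rev mulrC mulKf // gt_eqF. Qed.

Lemma symmetrize_tr : symmetrize^T = symmetrize.
Proof.
apply/matrixP => x y; rewrite !mxE P_swap -!sqr_sqrt_pi.
by field; rewrite !sqrt_pi_neq0.
Qed.

Lemma symmetrize_char_poly : char_poly symmetrize = char_poly P.
Proof.
rewrite -(@char_poly_similar _ _ P (diag_mx (\row_x (sqrt_pi x)^-1))
                                   (diag_mx (\row_x sqrt_pi x))).
  by congr char_poly; apply/matrixP => x y; rewrite mul_mx_diag mul_diag_mx !mxE.
apply/matrixP => x y; rewrite mul_diag_mx !mxE.
by case: eqP => [->|]; rewrite ?mulr1n ?mulr0n ?mulr0 ?divff.
Qed.

Lemma sqrt_pi_mulmx_symmetrize :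
  \row_x sqrt_pi x *m symmetrize = \row_x sqrt_pi x.
Proof.
apply/rowP => y; rewrite !mxE.
under eq_bigr => x _ do rewrite !mxE P_swap -!sqr_sqrt_pi.
rewrite (eq_bigr (fun x => sqrt_pi y * P y x)) => [|x _]; last first.
  by field; rewrite !sqrt_pi_neq0.
by rewrite -mulr_sumr P_stoch.2 mulr1.
Qed.

(* [g |-> \row_x sqrt (pi x) * g x 0] is an isometry from [pnorm2 pi] to the
   Euclidean norm that intertwines [P] with [symmetrize]; it sends
   [pmean pi g = 0] to orthogonality with the fixed vector [\row_x sqrt (pi x)]. *)
Lemma reversible_pmean0_contract (s : seq R) (g : 'cV[R]_n) :
  sorted_eigenvalues P s -> pmean pi g = 0 ->
  pnorm2 pi (P *m g) <= Num.max `|s`_1| `|s`_(n.-1)| ^+ 2 * pnorm2 pi g.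
Proof.
move=> [s_sorted Pchar] g_mean0.
pose w := \row_x (sqrt_pi x * g x 0).
have s_le1 : {in s, forall x, `|x| <= 1}.
  by move=> x xs; apply: stochastic_eigenvalue_le1; rewrite Pchar root_prod_XsubC.
have sqrt_pi_row_neq0 : \row_x sqrt_pi x != 0.
  apply/eqP => sqrt_pi0; move: pi_sum1; rewrite big1 => [/eqP|x _].
    by rewrite eq_sym oner_eq0.
  have /rowP/(_ x) := sqrt_pi0; rewrite !mxE => sqrt_pi_x0.
  by rewrite -sqr_sqrt_pi sqrt_pi_x0 expr0n.
have w_orth : (w *m (\row_x sqrt_pi x)^T) 0 0 = 0.
  rewrite mxE -[RHS]g_mean0; apply: eq_bigr => x _.
  by rewrite !mxE -sqr_sqrt_pi; ring.
have := symmetric_orthogonal_fixed_contract symmetrize_tr _ s_le1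
  sqrt_pi_mulmx_symmetrize sqrt_pi_row_neq0 w_orth.
have -> : \sum_i (w *m symmetrize) 0 i ^+ 2 = pnorm2 pi (P *m g).
  apply: eq_bigr => y _; rewrite !mxE.
  rewrite (eq_bigr (fun x => sqrt_pi y * (P y x * g x 0))) => [|x _]; last first.
    by rewrite !mxE P_swap -!sqr_sqrt_pi; field; rewrite !sqrt_pi_neq0.
  by rewrite -mulr_sumr exprMn sqr_sqrt_pi.
have -> : \sum_i w 0 i ^+ 2 = pnorm2 pi g.
  by apply: eq_bigr => x _; rewrite mxE exprMn sqr_sqrt_pi.
by apply; split; rewrite ?symmetrize_char_poly.
Qed.

Lemma reversible_sub_Pimx_contract (s : seq R) (f : 'cV[R]_n) :
  sorted_eigenvalues P s ->
  pnorm2 pi ((P - Pimx pi) *m f)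
    <= Num.max `|s`_1| `|s`_(n.-1)| ^+ 2 * pnorm2 pi f.
Proof.
move=> P_eig; set g := f - const_mx (pmean pi f).
have -> : (P - Pimx pi) *m f = P *m g.
  by rewrite mulmxBl mulmxBr -Pimx_mulmx_col mulmxA mulmx_Pimx //; case: P_stoch.
apply: le_trans (reversible_pmean0_contract P_eig (pmean_sub_pmean _ _)) _ => //.
apply: ler_wpM2l; first exact: sqr_ge0.
by rewrite /g pnorm2_sub_pmean // lerBlDr lerDl sqr_ge0.
Qed.
End Reversible.

Theorem proposition4p11 (R : rcfType) (n : nat) (pi : 'I_n -> R)
  (P : 'M[R]_n) (part : {set {set 'I_n}}) (s : seq R) (l : nat) (alpha : R) :
  pos_prob pi -> stochastic P -> reversible pi P ->
  partition part [set: 'I_n] ->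
  sorted_eigenvalues P s ->
  (2 <= l)%N -> 0 < alpha < 1 ->
  let A := alpha *: P + (1 - alpha) *: gibbs_kernel pi part in
  frob_pi2 pi (A ^+ l - Pimx pi)
    <= (1 - alpha * abs_spectral_gap n s) ^+ (2 * (l - 1))
       * frob_pi2 pi (A - Pimx pi).
Proof.
move=> [pi_gt0 pi_sum1] P_st P_rev part_full P_eig l_ge2.
move=> /andP[alpha_gt0 alpha_lt1].
cbv zeta; set A := alpha *: P + _.
set rho := Num.max `|s`_1| `|s`_(n.-1)|.
have alpha01 : 0 <= alpha <= 1 by rewrite !ltW.
have G_st := gibbs_kernel_stochastic pi_gt0 part_full.
have G_stat := gibbs_kernel_stationary pi_gt0 part_full.
have A_st : stochastic A := stochastic_mix alpha01 P_st G_st.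
have A_stat : stationary pi A :=
  stationary_mix alpha (reversible_stationary P_st P_rev) G_stat.
have -> : 1 - alpha * abs_spectral_gap n s = alpha * rho + (1 - alpha).
  by rewrite /abs_spectral_gap -/rho; ring.
have A_contract f : pnorm2 pi ((A - Pimx pi) *m f)
    <= (alpha * rho + (1 - alpha)) ^+ 2 * pnorm2 pi f.
  apply: mix_sub_Pimx_contract => //; first by rewrite le_max normr_ge0.
    exact: reversible_sub_Pimx_contract pi_gt0 pi_sum1 P_st P_rev _ _ P_eig.
  exact: stochastic_sub_Pimx_contract pi_gt0 pi_sum1 _ _ G_st G_stat.
case: l l_ge2 => [|[|k]] // _.
rewrite -(sub_Pimx_exp pi_sum1 _ A_st.2 A_stat) exprM subSS subn0.
exact: frob_pi2_exp_le (sqr_ge0 _) A_contract.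
Qed.
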